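(* Let $b\in\mathcal E_1$ with $b-1$ flat at $0$, let $\theta$ be the inverse germ of $t\mapsto t\,b(t)$, and let $\sigma(x)=\theta(x)^4$ with iterates $\sigma^n$ ($\sigma^0=\mathrm{id}$). There exists $\varepsilon>0$ such that for any smooth $\alpha$ with $\alpha(0)=\alpha'(0)=0$ and any $C^1$ function $\lambda$ with $\lambda(0)=\lambda'(0)=0$ (both defined on $(-\varepsilon,\varepsilon)$), setting $$u_n(x)=\alpha(x)\,\alpha(\sigma(x))\,\alpha(\sigma^2(x))\cdots\alpha(\sigma^n(x))\,\lambda(\sigma^{n+1}(x)),$$ (i) the series $\sum_{n=0}^{\infty}u_n(x)$ converges pointwise on $|x|<\varepsilon$, and (ii) its sum is of class $C^1$.
   Context: $\mathcal E_1$ denotes the ring of smooth function germs at $0\in\mathbb R$. A germ is flat at $0$ if all its derivatives (including its value) vanish at $0$. *)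

From Stdlib Require Import Reals.
From Coquelicot Require Import Coquelicot.
Open Scope R_scope.

Definition smooth_on (f : R -> R) (r : R) : Prop :=
  forall (n : nat) (x : R), Rabs x < r -> ex_derive_n f n x.

Definition C1_on (f : R -> R) (r : R) : Prop :=
  forall x : R, Rabs x < r -> ex_derive f x /\ continuous (Derive f) x.

Definition flat_at0 (f : R -> R) : Prop :=
  forall k : nat, Derive_n f k 0 = 0.

Fixpoint partial_prod (g : nat -> R) (n : nat) : R :=
  match n with
  | O => g O
  | S m => partial_prod g m * g (S m)
  end.

Definition iterate (s : R -> R) (n : nat) (x : R) : R := Nat.iter n s x.

Definition u_term (alpha lambda s : R -> R) (n : nat) (x : R) : R :=
  partial_prod (fun k => alpha (iterate s k x)) n * lambda (iterate s (S n) x).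

From Stdlib Require Import Reals Lra Ranalysis5.
From Coquelicot Require Import Coquelicot.
Open Scope R_scope.

(* Only the smoothness of theta and theta(0) = 0 matter: sigma = theta^4 then
   satisfies sigma(0) = sigma'(0) = 0, so on a ball B_eps depending only on theta
   we have |sigma'| <= 1/2 and |sigma x| <= |x|/2.  Given alpha and lambda, on a
   smaller ball B_h where |alpha| <= 1/4, |alpha'| <= 1, |lambda| <= M and
   |lambda'| <= 4M, the recursion u_(n+1) = alpha * (u_n o sigma) gives
   |u_n| <= M 2^-(n+1) and |u_n'| <= 4M 2^-(n+1), so the sum S is C^1 on B_h by
   uniform convergence of the derived series.  Since sigma maps B_rho into
   B_(rho/2), the functional equation S = alpha * ((lambda + S) o sigma) carries
   convergence and C^1 regularity from B_(rho/2) to B_rho, and finitely many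
   doublings reach B_eps. *)

Lemma locally_abs_lt (r z : R) : Rabs z < r -> locally z (fun w => Rabs w < r).
Proof.
  intro Hz.
  assert (Hgap : 0 < r - Rabs z) by lra.
  exists (mkposreal _ Hgap); intros w Hw; change R in w.
  change (Rabs (w - z) < r - Rabs z) in Hw.
  pose proof (Rabs_triang (w - z) z) as Htri.
  replace (w - z + z) with w in Htri by ring.
  lra.
Qed.

Lemma locally_0_abs_le (P : R -> Prop) (r : R) : 0 < r -> locally 0 P ->
  exists d, (0 < d <= r) /\ forall x, Rabs x < d -> P x.
Proof.
  intros Hr [d Hd].
  exists (Rmin d r); split.
  - split; [apply Rmin_glb_lt; [apply cond_pos | lra] | apply Rmin_r].
  - intros x Hx; apply Hd.
    change (Rabs (x - 0) < d); rewrite Rminus_0_r.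
    pose proof (Rmin_l d r); lra.
Qed.

Lemma continuous_abs_lt (f : R -> R) (x0 c : R) :
  continuous f x0 -> Rabs (f x0) < c -> locally x0 (fun x => Rabs (f x) < c).
Proof. intros Hf Hc; exact (Hf _ (locally_abs_lt c (f x0) Hc)). Qed.

Lemma C1_on_intro (f df : R -> R) (r : R) :
  (forall x, Rabs x < r -> is_derive f x (df x)) ->
  (forall x, Rabs x < r -> continuous df x) -> C1_on f r.
Proof.
  intros Hder Hcont x Hx; split.
  - exists (df x); exact (Hder x Hx).
  - apply (continuous_ext_loc _ df); [| exact (Hcont x Hx)].
    apply (filter_imp _ _ (fun y Hy => eq_sym (is_derive_unique _ _ _ (Hder y Hy)))).
    exact (locally_abs_lt r x Hx).
Qed.

Lemma C1_on_ext (f g : R -> R) (r : R) :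
  (forall x, Rabs x < r -> f x = g x) -> C1_on g r -> C1_on f r.
Proof.
  intros Hfg Hg; apply (C1_on_intro f (Derive g)).
  - intros x Hx; destruct (Hg x Hx) as [Hd _].
    apply (is_derive_ext_loc g); [| exact (Derive_correct _ _ Hd)].
    apply (filter_imp _ _ (fun y Hy => eq_sym (Hfg y Hy))).
    exact (locally_abs_lt r x Hx).
  - intros x Hx; exact (proj2 (Hg x Hx)).
Qed.

Lemma C1_on_le (f : R -> R) (r r' : R) : r' <= r -> C1_on f r -> C1_on f r'.
Proof. intros Hr Hf x Hx; apply Hf; lra. Qed.

Lemma smooth_on_C1_on (f : R -> R) (r : R) : smooth_on f r -> C1_on f r.
Proof.
  intros Hf x Hx; split; [exact (Hf 1%nat x Hx) |].
  exact (ex_derive_continuous (Derive f) x (Hf 2%nat x Hx)).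
Qed.

Lemma C1_on_const (c r : R) : C1_on (fun _ => c) r.
Proof.
  apply (C1_on_intro _ (fun _ => 0)).
  - intros x _; exact (is_derive_const c x).
  - intros x _; apply continuous_const.
Qed.

Lemma C1_on_plus (f g : R -> R) (r : R) :
  C1_on f r -> C1_on g r -> C1_on (fun x => f x + g x) r.
Proof.
  intros Hf Hg; apply (C1_on_intro _ (fun x => Derive f x + Derive g x)).
  - intros x Hx.
    exact (is_derive_plus f g x _ _ (Derive_correct _ _ (proj1 (Hf x Hx)))
             (Derive_correct _ _ (proj1 (Hg x Hx)))).
  - intros x Hx; exact (continuous_plus _ _ x (proj2 (Hf x Hx)) (proj2 (Hg x Hx))).
Qed.

Lemma C1_on_mult (f g : R -> R) (r : R) :
  C1_on f r -> C1_on g r -> C1_on (fun x => f x * g x) r.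
Proof.
  intros Hf Hg; apply (C1_on_intro _ (fun x => Derive f x * g x + f x * Derive g x)).
  - intros x Hx; destruct (Hf x Hx) as [Hfd _]; destruct (Hg x Hx) as [Hgd _].
    rewrite <- (Derive_mult f g x Hfd Hgd).
    exact (Derive_correct _ _ (ex_derive_mult f g x Hfd Hgd)).
  - intros x Hx; destruct (Hf x Hx) as [Hfd Hfc]; destruct (Hg x Hx) as [Hgd Hgc].
    exact (continuous_plus (fun y => Derive f y * g y) (fun y => f y * Derive g y) x
             (continuous_mult _ _ x Hfc (ex_derive_continuous g x Hgd))
             (continuous_mult _ _ x (ex_derive_continuous f x Hfd) Hgc)).
Qed.

Lemma C1_on_pow (f : R -> R) (n : nat) (r : R) :
  C1_on f r -> C1_on (fun x => f x ^ n) r.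
Proof.
  intro Hf; induction n as [| n IHn].
  - exact (C1_on_const 1 r).
  - exact (C1_on_mult f (fun x => f x ^ n) r Hf IHn).
Qed.

Lemma C1_on_comp (f g : R -> R) (r r' : R) :
  C1_on f r -> (forall x, Rabs x < r -> Rabs (f x) < r') -> C1_on g r' ->
  C1_on (fun x => g (f x)) r.
Proof.
  intros Hf Hmaps Hg; apply (C1_on_intro _ (fun x => Derive f x * Derive g (f x))).
  - intros x Hx; destruct (Hf x Hx) as [Hfd _]; destruct (Hg (f x) (Hmaps x Hx)) as [Hgd _].
    rewrite <- (Derive_comp g f x Hgd Hfd).
    exact (Derive_correct _ _ (ex_derive_comp g f x Hgd Hfd)).
  - intros x Hx; destruct (Hf x Hx) as [Hfd Hfc]; destruct (Hg (f x) (Hmaps x Hx)) as [_ Hgc].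
    exact (continuous_mult (Derive f) (fun y => Derive g (f y)) x Hfc
             (continuous_comp f (Derive g) x (ex_derive_continuous f x Hfd) Hgc)).
Qed.

Lemma superattracting_half_contraction (s : R -> R) (r : R) :
  0 < r -> C1_on s r -> s 0 = 0 -> Derive s 0 = 0 ->
  exists eps, (0 < eps <= r) /\
    forall x, Rabs x < eps -> Rabs (Derive s x) <= 1/2 /\ Rabs (s x) <= Rabs x / 2.
Proof.
  intros Hr Hs Hs0 HDs0.
  assert (Hr0 : Rabs 0 < r) by (rewrite Rabs_R0; exact Hr).
  assert (Hnear : locally 0 (fun x => Rabs x < r /\ Rabs (Derive s x) < 1/2)).
  { apply filter_and; [exact (locally_abs_lt r 0 Hr0) |].
    apply continuous_abs_lt; [exact (proj2 (Hs 0 Hr0)) | rewrite HDs0, Rabs_R0; lra]. }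
  destruct (locally_0_abs_le _ r Hr Hnear) as (eps & Heps & Hball).
  exists eps; split; [exact Heps |].
  intros x Hx; split; [apply Rlt_le; exact (proj2 (Hball x Hx)) |].
  assert (Hvar := bounded_variation s (Derive s) (1/2) 0 x).
  rewrite Hs0, !Rminus_0_r in Hvar.
  cut (Rabs (s x) <= 1/2 * Rabs x); [lra | apply Hvar].
  intros t Ht; rewrite Rminus_0_r in Ht.
  destruct (Hball t ltac:(lra)) as [Htr HDt].
  split; [exact (Derive_correct _ _ (proj1 (Hs t Htr))) | lra].
Qed.

Lemma is_derive_sum_f_R0 (U : nat -> R -> R) (n : nat) (x : R) :
  (forall k, ex_derive (U k) x) ->
  is_derive (fun y => sum_f_R0 (fun k => U k y) n) x (sum_f_R0 (fun k => Derive (U k) x) n).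
Proof.
  intro HU; induction n as [| n IHn]; simpl.
  - exact (Derive_correct _ _ (HU 0%nat)).
  - exact (is_derive_plus _ (U (S n)) x _ _ IHn (Derive_correct _ _ (HU (S n)))).
Qed.

Lemma continuous_sum_f_R0 (U : nat -> R -> R) (n : nat) (x : R) :
  (forall k, continuous (U k) x) -> continuous (fun y => sum_f_R0 (fun k => U k y) n) x.
Proof.
  intro HU; induction n as [| n IHn]; simpl.
  - exact (HU 0%nat).
  - exact (continuous_plus _ (U (S n)) x IHn (HU (S n))).
Qed.

Lemma C1_on_Series (U : nat -> R -> R) (M : nat -> R) (r : R) : 0 < r ->
  (forall k, C1_on (U k) r) ->
  (forall x, Rabs x < r -> ex_series (fun k => U k x)) ->
  (forall k x, Rabs x < r -> Rabs (Derive (U k) x) <= M k) -> ex_series M ->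
  C1_on (fun x => Series (fun k => U k x)) r.
Proof.
  intros Hr HU Hconv HM HMs.
  set (rp := mkposreal r Hr).
  assert (Boule_0 : forall y, Boule 0 rp y <-> Rabs y < r).
  { intro y; unfold Boule; rewrite Rminus_0_r; reflexivity. }
  assert (HM0 : forall k, 0 <= M k).
  { intro k; apply (Rle_trans _ _ _ (Rabs_pos (Derive (U k) 0))), HM; rewrite Rabs_R0; exact Hr. }
  (* [CVN_CVU] needs convergence everywhere, so the derivatives are cut off outside the ball. *)
  set (dU := fun k y => if Rlt_dec (Rabs y) r then Derive (U k) y else 0).
  assert (dU_ball : forall k y, Rabs y < r -> dU k y = Derive (U k) y).
  { intros k y Hy; unfold dU; destruct (Rlt_dec (Rabs y) r); [reflexivity | contradiction]. }
  assert (dU_le : forall k y, Rabs (dU k y) <= M k).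
  { intros k y; unfold dU; destruct (Rlt_dec (Rabs y) r) as [Hy | _].
    - exact (HM k y Hy).
    - rewrite Rabs_R0; exact (HM0 k). }
  assert (dU_sum : forall y, ex_series (fun k => dU k y)).
  { intro y; exact (ex_series_le (fun k => dU k y) M (fun k => dU_le k y) HMs). }
  set (cv := fun y => exist (fun l => Un_cv (fun N => SP dU N y) l) (Series (fun k => dU k y))
                        (proj1 (is_series_Reals _ _) (Series_correct _ (dU_sum y)))).
  assert (Hcvu : CVU (fun n => SP dU n) (SFL dU cv) 0 rp).
  { apply CVN_CVU; exists M, (Series M); split.
    - apply (proj1 (is_series_Reals _ _)).
      apply (is_series_ext M); [intro k; symmetry; exact (Rabs_pos_eq _ (HM0 k)) |].
      exact (Series_correct _ HMs).
    - intros n y _; exact (dU_le n y). }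
  assert (SP_ball : forall n y, Rabs y < r ->
            SP dU n y = sum_f_R0 (fun k => Derive (U k) y) n).
  { intros n y Hy; apply sum_eq; intros k _; exact (dU_ball k y Hy). }
  assert (Hcont : forall y, Rabs y < r -> continuity_pt (SFL dU cv) y).
  { intros y Hy; apply (CVU_continuity _ _ 0 rp Hcvu); [| rewrite Boule_0; exact Hy].
    intros n z Hz; rewrite Boule_0 in Hz; apply continuity_pt_filterlim.
    apply (continuous_ext_loc _ (fun w => sum_f_R0 (fun k => Derive (U k) w) n)).
    - apply (filter_imp _ _ (fun w Hw => eq_sym (SP_ball n w Hw))).
      exact (locally_abs_lt r z Hz).
    - apply continuous_sum_f_R0; intro k; exact (proj2 (HU k z Hz)). }
  apply (C1_on_intro _ (SFL dU cv)).
  - intros x Hx; apply is_derive_Reals.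
    apply (derivable_pt_lim_CVU (SP U) (SP dU) _ _ x 0 rp); try (rewrite Boule_0; exact Hx).
    + intros y n Hy; rewrite Boule_0 in Hy; apply is_derive_Reals; rewrite SP_ball by exact Hy.
      apply is_derive_sum_f_R0; intro k; exact (proj1 (HU k y Hy)).
    + intros y Hy; rewrite Boule_0 in Hy.
      exact (proj1 (is_series_Reals _ _) (Series_correct _ (Hconv y Hy))).
    + exact Hcvu.
    + intros y Hy; rewrite Boule_0 in Hy; exact (Hcont y Hy).
  - intros x Hx; apply continuity_pt_filterlim, Hcont, Hx.
Qed.

Lemma partial_prod_ext (g g' : nat -> R) (n : nat) :
  (forall k, g k = g' k) -> partial_prod g n = partial_prod g' n.
Proof. intro Hg; induction n as [| n IHn]; simpl; rewrite ?IHn, Hg; reflexivity. Qed.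

Lemma partial_prod_S (g : nat -> R) (n : nat) :
  partial_prod g (S n) = g 0%nat * partial_prod (fun k => g (S k)) n.
Proof.
  induction n as [| n IHn]; [reflexivity |].
  change (partial_prod g (S (S n))) with (partial_prod g (S n) * g (S (S n))).
  rewrite IHn; simpl; ring.
Qed.

Lemma u_term_S (alpha lambda s : R -> R) (n : nat) (x : R) :
  u_term alpha lambda s (S n) x = alpha x * u_term alpha lambda s n (s x).
Proof.
  unfold u_term, iterate; rewrite partial_prod_S, !Nat.iter_succ_r.
  rewrite (partial_prod_ext _ (fun k => alpha (Nat.iter k s (s x)))) by
    (intro k; rewrite Nat.iter_succ_r; reflexivity).
  simpl; ring.
Qed.

(* The factor 4 makes this class stable under [G |-> alpha * (G o s)] once |alpha| <= 1/4, |alpha'| <= 1 and |s'| <= 1/2. *)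
Definition C1_bounded_on (f : R -> R) (r M : R) : Prop :=
  C1_on f r /\ forall x, Rabs x < r -> Rabs (f x) <= M /\ Rabs (Derive f x) <= 4 * M.

Lemma C1_bounded_on_ext (f g : R -> R) (r M : R) :
  (forall x, f x = g x) -> C1_bounded_on g r M -> C1_bounded_on f r M.
Proof.
  intros Hfg [Hg Hbound]; split.
  - exact (C1_on_ext f g r (fun x _ => Hfg x) Hg).
  - intros x Hx; rewrite Hfg, (Derive_ext f g x Hfg); exact (Hbound x Hx).
Qed.

Definition u_series_C1_on (alpha lambda s : R -> R) (r : R) : Prop :=
  (forall x, Rabs x < r -> ex_series (fun n => u_term alpha lambda s n x)) /\
  C1_on (fun x => Series (fun n => u_term alpha lambda s n x)) r.

Section SmallBall.

Variables (alpha s : R -> R) (h : R).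
Hypothesis alpha_C1 : C1_on alpha h.
Hypothesis s_C1 : C1_on s h.
Hypothesis s_maps : forall x, Rabs x < h -> Rabs (s x) < h.
Hypothesis alpha_small : forall x, Rabs x < h -> Rabs (alpha x) <= 1/4.
Hypothesis Dalpha_small : forall x, Rabs x < h -> Rabs (Derive alpha x) <= 1.
Hypothesis Ds_small : forall x, Rabs x < h -> Rabs (Derive s x) <= 1/2.

Lemma C1_bounded_on_mult_comp (G : R -> R) (M : R) :
  C1_bounded_on G h M -> C1_bounded_on (fun x => alpha x * G (s x)) h (M / 2).
Proof.
  intros [HG HGbound]; split.
  - exact (C1_on_mult _ _ h alpha_C1 (C1_on_comp s G h h s_C1 s_maps HG)).
  - intros x Hx.
    destruct (HGbound (s x) (s_maps x Hx)) as [HGs HDGs].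
    pose proof (alpha_small x Hx); pose proof (Dalpha_small x Hx); pose proof (Ds_small x Hx).
    assert (HGd : ex_derive G (s x)) by exact (proj1 (HG _ (s_maps x Hx))).
    assert (Hsd : ex_derive s x) by exact (proj1 (s_C1 x Hx)).
    rewrite (Derive_mult alpha (fun y : R => G (s y)) x (proj1 (alpha_C1 x Hx))
               (ex_derive_comp G s x HGd Hsd)), (Derive_comp G s x HGd Hsd).
    pose proof (Rabs_pos (alpha x)); pose proof (Rabs_pos (G (s x))).
    pose proof (Rabs_pos (Derive alpha x)); pose proof (Rabs_pos (Derive s x)).
    pose proof (Rabs_pos (Derive G (s x))).
    assert (Hchain : Rabs (Derive s x) * Rabs (Derive G (s x)) <= 2 * M) by nra.
    rewrite Rabs_mult; split; [nra |].
    apply (Rle_trans _ _ _ (Rabs_triang _ _)); rewrite !Rabs_mult; nra.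
Qed.

Lemma u_term_C1_bounded_on (lambda : R -> R) (M : R) :
  C1_bounded_on lambda h M ->
  forall n, C1_bounded_on (u_term alpha lambda s n) h (M * (1/2) ^ S n).
Proof.
  intros Hlambda n; induction n as [| n IHn].
  - replace (M * (1/2) ^ 1) with (M / 2) by (simpl; field).
    exact (C1_bounded_on_mult_comp lambda M Hlambda).
  - apply (C1_bounded_on_ext _ (fun x => alpha x * u_term alpha lambda s n (s x))).
    { intro x; apply u_term_S. }
    replace (M * (1/2) ^ S (S n)) with (M * (1/2) ^ S n / 2) by (simpl; field).
    exact (C1_bounded_on_mult_comp _ _ IHn).
Qed.

Lemma u_series_C1_on_small (lambda : R -> R) (M : R) :
  0 < h -> C1_bounded_on lambda h M -> u_series_C1_on alpha lambda s h.
Proof.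
  intros Hh Hlambda.
  pose proof (u_term_C1_bounded_on lambda M Hlambda) as Hu.
  assert (Hgeom : ex_series (fun n => M * (1/2) ^ S n)).
  { apply (ex_series_scal_l M (fun n => (1/2) ^ S n)).
    apply (ex_series_incr_1 (fun n => (1/2) ^ n)), ex_series_geom.
    rewrite Rabs_pos_eq; lra. }
  assert (Hconv : forall x, Rabs x < h -> ex_series (fun n => u_term alpha lambda s n x)).
  { intros x Hx; apply (ex_series_le (fun n => u_term alpha lambda s n x) _
                          (fun n => proj1 (proj2 (Hu n) x Hx)) Hgeom). }
  split; [exact Hconv |].
  apply (C1_on_Series _ (fun n => 4 * (M * (1/2) ^ S n)) h Hh (fun n => proj1 (Hu n)) Hconv).
  - intros n x Hx; exact (proj2 (proj2 (Hu n) x Hx)).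
  - exact (ex_series_scal_l 4 _ Hgeom).
Qed.

End SmallBall.

Lemma u_series_C1_on_le (alpha lambda s : R -> R) (r r' : R) :
  r' <= r -> u_series_C1_on alpha lambda s r -> u_series_C1_on alpha lambda s r'.
Proof.
  intros Hr [Hconv HC1]; split; [intros x Hx; apply Hconv; lra | exact (C1_on_le _ r r' Hr HC1)].
Qed.

Lemma u_series_C1_on_double (alpha lambda s : R -> R) (rho : R) :
  C1_on alpha rho -> C1_on lambda (rho / 2) -> C1_on s rho ->
  (forall x, Rabs x < rho -> Rabs (s x) < rho / 2) ->
  u_series_C1_on alpha lambda s (rho / 2) -> u_series_C1_on alpha lambda s rho.
Proof.
  intros Halpha Hlambda Hs Hmaps [Hconv HC1].
  assert (Hconv' : forall x, Rabs x < rho -> ex_series (fun n => u_term alpha lambda s n x)).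
  { intros x Hx; apply ex_series_incr_1.
    apply (ex_series_ext (fun n => alpha x * u_term alpha lambda s n (s x))).
    - intro n; symmetry; apply u_term_S.
    - exact (ex_series_scal_l (alpha x) _ (Hconv _ (Hmaps x Hx))). }
  split; [exact Hconv' |].
  apply (C1_on_ext _ (fun x => alpha x *
           (lambda (s x) + Series (fun n => u_term alpha lambda s n (s x))))).
  - intros x Hx; rewrite Series_incr_1 by exact (Hconv' x Hx).
    rewrite (Series_ext _ (fun n => alpha x * u_term alpha lambda s n (s x)))
      by (intro n; apply u_term_S).
    rewrite Series_scal_l; change (u_term alpha lambda s 0 x) with (alpha x * lambda (s x)).
    ring.
  - apply (C1_on_mult _ _ _ Halpha).
    apply (C1_on_comp s (fun y => lambda y + Series (fun n => u_term alpha lambda s n y))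
             rho (rho / 2) Hs Hmaps).
    exact (C1_on_plus _ _ _ Hlambda HC1).
Qed.

Lemma u_series_C1_on_extend (alpha lambda s : R -> R) (eps h : R) :
  0 < eps -> 0 < h -> C1_on alpha eps -> C1_on lambda eps -> C1_on s eps ->
  (forall x, Rabs x < eps -> Rabs (s x) <= Rabs x / 2) ->
  u_series_C1_on alpha lambda s h -> u_series_C1_on alpha lambda s eps.
Proof.
  intros Heps Hh Halpha Hlambda Hs Hcontr Hsmall.
  assert (Hhalving : forall n rho, 0 <= rho <= eps ->
            u_series_C1_on alpha lambda s (rho * (1/2) ^ n) -> u_series_C1_on alpha lambda s rho).
  { intro n; induction n as [| n IHn]; intros rho Hrho Hu.
    - rewrite pow_O, Rmult_1_r in Hu; exact Hu.
    - apply u_series_C1_on_double.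
      + exact (C1_on_le _ eps rho (proj2 Hrho) Halpha).
      + exact (C1_on_le _ eps (rho / 2) ltac:(lra) Hlambda).
      + exact (C1_on_le _ eps rho (proj2 Hrho) Hs).
      + intros x Hx; specialize (Hcontr x ltac:(lra)); lra.
      + apply IHn; [lra |].
        replace (rho / 2 * (1/2) ^ n) with (rho * (1/2) ^ S n) by (simpl; field).
        exact Hu. }
  destruct (pow_lt_1_zero (1/2) ltac:(rewrite Rabs_pos_eq; lra) (h / eps)
              ltac:(apply Rdiv_lt_0_compat; assumption)) as [N HN].
  specialize (HN N (le_n N)); rewrite Rabs_pos_eq in HN by (apply pow_le; lra).
  apply (Hhalving N eps ltac:(lra)), (u_series_C1_on_le _ _ _ h); [| exact Hsmall].
  apply Rlt_le; apply (Rmult_lt_compat_l eps) in HN; [| exact Heps].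
  replace (eps * (h / eps)) with h in HN by (field; lra); exact HN.
Qed.

Lemma u_series_C1_on_near_0 (alpha lambda s : R -> R) (eps : R) :
  0 < eps -> C1_on alpha eps -> alpha 0 = 0 -> Rabs (Derive alpha 0) < 1 ->
  C1_on lambda eps -> C1_on s eps ->
  (forall x, Rabs x < eps -> Rabs (Derive s x) <= 1/2 /\ Rabs (s x) <= Rabs x / 2) ->
  u_series_C1_on alpha lambda s eps.
Proof.
  intros Heps Halpha Halpha0 HDalpha0 Hlambda Hs Hcontr.
  assert (Heps0 : Rabs 0 < eps) by (rewrite Rabs_R0; exact Heps).
  set (M := Rabs (lambda 0) + Rabs (Derive lambda 0) + 1).
  assert (Hnear : locally 0 (fun x => Rabs (alpha x) < 1/4 /\ Rabs (Derive alpha x) < 1 /\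
                                      Rabs (lambda x) < M /\ Rabs (Derive lambda x) < 4 * M)).
  { destruct (Halpha 0 Heps0) as [Hda Hca]; destruct (Hlambda 0 Heps0) as [Hdl Hcl].
    pose proof (Rabs_pos (lambda 0)); pose proof (Rabs_pos (Derive lambda 0)).
    repeat apply filter_and; apply continuous_abs_lt;
      rewrite ?Halpha0, ?Rabs_R0; unfold M; try lra.
    - exact (ex_derive_continuous alpha 0 Hda).
    - exact Hca.
    - exact (ex_derive_continuous lambda 0 Hdl).
    - exact Hcl. }
  destruct (locally_0_abs_le _ eps Heps Hnear) as (h & [Hh Hheps] & Hsmall).
  apply (u_series_C1_on_extend alpha lambda s eps h Heps Hh Halpha Hlambda Hs
           (fun x Hx => proj2 (Hcontr x Hx))).
  apply (u_series_C1_on_small alpha s h) with (M := M); try assumption.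
  - exact (C1_on_le alpha eps h Hheps Halpha).
  - exact (C1_on_le s eps h Hheps Hs).
  - intros x Hx; pose proof (proj2 (Hcontr x ltac:(lra))); pose proof (Rabs_pos x); lra.
  - intros x Hx; pose proof (Hsmall x Hx); lra.
  - intros x Hx; pose proof (Hsmall x Hx); lra.
  - intros x Hx; exact (proj1 (Hcontr x ltac:(lra))).
  - split; [exact (C1_on_le lambda eps h Hheps Hlambda) |].
    intros x Hx; pose proof (Hsmall x Hx); lra.
Qed.

Theorem lemma3p11 :
  forall (b theta : R -> R),
    (* b is a smooth germ at 0 with b - 1 flat at 0 *)
    (exists r, 0 < r /\ smooth_on b r) ->
    flat_at0 (fun t => b t - 1) ->
    (* theta is a smooth germ at 0, the inverse germ of t |-> t b(t) *)
    (exists r, 0 < r /\ smooth_on theta r) ->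
    theta 0 = 0 ->
    (exists d, 0 < d /\
       (forall t, Rabs t < d -> theta (t * b t) = t) /\
       (forall x, Rabs x < d -> theta x * b (theta x) = x)) ->
    let sigma := fun x => (theta x) ^ 4 in
    exists eps, 0 < eps /\
      forall alpha lambda : R -> R,
        smooth_on alpha eps -> alpha 0 = 0 -> Derive alpha 0 = 0 ->
        C1_on lambda eps -> lambda 0 = 0 -> Derive lambda 0 = 0 ->
        (forall x, Rabs x < eps -> ex_series (fun n => u_term alpha lambda sigma n x)) /\
        C1_on (fun x => Series (fun n => u_term alpha lambda sigma n x)) eps.
Proof.
  intros b theta _ _ [r [Hr Htheta]] Htheta0 _ sigma.
  assert (Hr0 : Rabs 0 < r) by (rewrite Rabs_R0; exact Hr).
  assert (sigma_C1 : C1_on sigma r).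
  { exact (C1_on_pow theta 4 r (smooth_on_C1_on theta r Htheta)). }
  assert (Dsigma0 : Derive sigma 0 = 0).
  { unfold sigma; rewrite Derive_pow by exact (Htheta 1%nat 0 Hr0); rewrite Htheta0; simpl; ring. }
  destruct (superattracting_half_contraction sigma r Hr sigma_C1
              ltac:(unfold sigma; rewrite Htheta0; ring) Dsigma0) as (eps & [Heps Hepsr] & Hcontr).
  exists eps; split; [exact Heps |].
  intros alpha lambda Halpha Halpha0 HDalpha0 Hlambda _ _.
  apply (u_series_C1_on_near_0 alpha lambda sigma eps Heps (smooth_on_C1_on alpha eps Halpha)
           Halpha0 ltac:(rewrite HDalpha0, Rabs_R0; lra) Hlambda
           (C1_on_le sigma r eps Hepsr sigma_C1) Hcontr).
Qed.
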